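(* Let $f=C_1\wedge\dots\wedge C_k$ be a CNF formula over variables $x_1,\dots,x_n$ ($n\ge1$), and let $\mathbb{K}_+,\mathbb{K}_-$ and $\mathcal{H}=\{\{C_1\},\dots,\{C_k\}\}$ be constructed from $f$ as described in the context. If $H$ is a minimal hypothesis of $(\mathbb{K}_+,\mathbb{K}_-)$ with $H\notin\mathcal{H}$, then $H\subseteq\{x_1,\neg x_1,\dots,x_n,\neg x_n\}$.
   Context: Formal contexts, derivation operators and hypotheses: for a positive context $\mathbb{K}_+=(G_+,M,I_+)$ and negative context $\mathbb{K}_-=(G_-,M,I_-)$, write $B^+=\{g\in G_+:(g,m)\in I_+\ \forall m\in B\}$ for $B\subseteq M$, $A^+=\{m\in M:(g,m)\in I_+\ \forall g\in A\}$ for $A\subseteq G_+$, and $g^-=\{m:(g,m)\in I_-\}$ for $g\in G_-$. A hypothesis is $H\subseteq M$ with $H^{++}=H$ and $H\not\subseteq g^-$ for all $g\in G_-$; a minimal hypothesis is a hypothesis with no proper subset being a hypothesis (if no hypothesis exists, the set of minimal hypotheses is $\{M\}$). Construction: each clause $C_j$ is a disjunction of literals from $L=\{x_1,\neg x_1,\dots,x_n,\neg x_n\}$. Attributes: $M=\{C_1,\dots,C_k\}\cup L$ (clauses and literals are treated as distinct attribute symbols). Positive objects: $G_+=\{g_l: l\in L\}\cup\{g_{C_1},\dots,g_{C_k}\}$. Negative objects: $G_-=\{h_1,\dots,h_n\}$. Incidence $I_+$: $g_l$ has attribute $C_j$ iff the literal $l$ does not occur in $C_j$; $g_l$ has literal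 attribute $l'\in L$ iff $l'\neq l$; $g_{C_j}$ has exactly the attribute $C_j$. Incidence $I_-$: $h_i$ has exactly the attributes $L\setminus\{x_i,\neg x_i\}$. *)

From mathcomp Require Import all_boot.
Set Implicit Arguments. Unset Strict Implicit. Unset Printing Implicit Defensive.

(* A literal over variables x_0..x_{n-1}: (i, true) = x_i, (i, false) = ~x_i. *)
Definition lit (n : nat) : finType := ('I_n * bool)%type.

(* Attributes M = {C_1..C_k} + L (disjoint union). *)
Definition attr (n k : nat) : finType := ('I_k + lit n)%type.
(* Positive objects G_+ = {g_l : l in L} + {g_C_j}. *)
Definition gpos (n k : nat) : finType := (lit n + 'I_k)%type.
Definition gneg (n : nat) : finType := 'I_n.

Section Construction.
Variables (n k : nat) (C : 'I_k -> {set lit n}).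

Definition Ipos (g : gpos n k) (m : attr n k) : bool :=
  match g, m with
  | inl l, inl j => l \notin C j
  | inl l, inr l' => l' != l
  | inr j, inl j' => j' == j
  | inr _, inr _ => false
  end.

Definition Ineg (g : gneg n) (m : attr n k) : bool :=
  match m with
  | inl _ => false
  | inr l => l.1 != g
  end.

Definition ext_pos (B : {set attr n k}) : {set gpos n k} :=
  [set g | [forall m in B, Ipos g m]].
Definition int_pos (A : {set gpos n k}) : {set attr n k} :=
  [set m | [forall g in A, Ipos g m]].
Definition int_neg (g : gneg n) : {set attr n k} := [set m | Ineg g m].

Definition is_hypothesis (H : {set attr n k}) : bool :=
  (int_pos (ext_pos H) == H) && [forall g : gneg n, ~~ (H \subset int_neg g)].

(* minimal hypothesis, with the convention that if no hypothesis exists,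
   the set of minimal hypotheses is {M} *)
Definition is_min_hypothesis (H : {set attr n k}) : bool :=
  (is_hypothesis H && [forall H' : {set attr n k}, (H' \proper H) ==> ~~ is_hypothesis H'])
  || ([forall H' : {set attr n k}, ~~ is_hypothesis H'] && (H == setT)).

End Construction.

From mathcomp Require Import all_boot.
Set Implicit Arguments. Unset Strict Implicit. Unset Printing Implicit Defensive.

(* Each clause C_j alone is a hypothesis: the object g_{C_j} has intent exactly
   {C_j}, which makes {C_j} closed, and no negative object carries a clause
   attribute.  A minimal hypothesis containing C_j therefore contains the
   hypothesis {C_j}, and so equals it. *)

Section ClauseHypotheses.
Variables (n k : nat) (C : 'I_k -> {set lit n}).

Lemma min_hypothesis_sub (H H' : {set attr n k}) :
  is_min_hypothesis C H -> is_hypothesis C H' -> H' \subset H -> H' = H.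
Proof.
move=> Hmin hypH' subH'H.
case/orP: Hmin => [/andP[_ /forallP minH] | /andP[/forallP noHyp _]].
- apply/eqP; apply: contraT => neH'H.
  have properH'H : H' \proper H by rewrite properEneq neH'H.
  by move/implyP: (minH H') => /(_ properH'H); rewrite hypH'.
- by move: (noHyp H'); rewrite hypH'.
Qed.

Lemma clause_object_ext (j : 'I_k) :
  (inr j : gpos n k) \in ext_pos C [set inl j].
Proof. by rewrite inE; apply/forall_inP => m; rewrite inE => /eqP ->; rewrite /= eqxx. Qed.

Lemma int_ext_clause (j : 'I_k) :
  int_pos C (ext_pos C [set inl j]) = [set inl j].
Proof.
apply/setP => m; rewrite !inE; apply/idP/idP.
- by move/forall_inP/(_ _ (clause_object_ext j)); case: m.
- move/eqP->; apply/forall_inP => g; rewrite inE => /forall_inP/(_ (inl j)).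
  by rewrite inE eqxx => /(_ isT).
Qed.

Lemma clause_hypothesis (j : 'I_k) : is_hypothesis C [set inl j].
Proof.
rewrite /is_hypothesis int_ext_clause eqxx /=.
by apply/forallP => g; apply/subsetPn; exists (inl j); rewrite !inE.
Qed.

End ClauseHypotheses.

Theorem proposition1 (n k : nat) (C : 'I_k -> {set lit n}) (H : {set attr n k}) :
  0 < n ->
  is_min_hypothesis C H ->
  (forall j : 'I_k, H != [set (inl j : attr n k)]) ->
  H \subset [set (inr l : attr n k) | l : lit n].
Proof.
move=> _ minH notClause; apply/subsetP => -[j | l] Hm; last exact: imset_f.
have subjH : [set inl j] \subset H by rewrite sub1set.
by move: (notClause j); rewrite -(min_hypothesis_sub minH (clause_hypothesis C j) subjH) eqxx.
Qed.
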